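(* Let $G$ be the $m\times n$ grid with $m,n\ge 2$, and let $L$ be a landmark set with $(1,z),(m,z')\in L$, where $1\le z<z'\le n$, such that $L$ contains no vertex $(1,w)$ with $z<w\le z'$. Then $L$ contains a vertex $(a,b)$ such that either ($b\le z$ and $a>1$) or ($b>z'$ and $a=1$).
   Context: The $m\times n$ grid $G$ has vertex set $V=\{(i,j):1\le i\le m,\ 1\le j\le n\}$, with $(i_1,j_1),(i_2,j_2)$ adjacent iff $|i_1-i_2|+|j_1-j_2|=1$; thus $d((i_1,j_1),(i_2,j_2))=|i_1-i_2|+|j_1-j_2|$. A vertex $x$ separates $u,v$ if $d(x,u)\neq d(x,v)$. A landmark set is $L\subseteq V$ such that every pair of distinct vertices is separated by some vertex of $L$. *)

From Stdlib Require Import Arith Lia.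

Definition vertex : Type := (nat * nat)%type.

Definition in_grid (m n : nat) (v : vertex) : Prop :=
  1 <= fst v <= m /\ 1 <= snd v <= n.

Definition absdiff (a b : nat) : nat := (a - b) + (b - a).

Definition gdist (u v : vertex) : nat :=
  absdiff (fst u) (fst v) + absdiff (snd u) (snd v).

Definition separates (x u v : vertex) : Prop := gdist x u <> gdist x v.

Definition landmark_set (m n : nat) (L : vertex -> Prop) : Prop :=
  (forall v, L v -> in_grid m n v) /\
  (forall u v, in_grid m n u -> in_grid m n v -> u <> v ->
     exists x, L x /\ separates x u v).

From Stdlib Require Import Arith Lia.

(* The pair (1, z+1), (2, z) is equidistant from every vertex (a, b) with
   a = 1 and b <= z, or with a >= 2 and b > z.  So any landmark separating it
   has a = 1 and b > z (hence b > z' by the gap hypothesis), or a >= 2 and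
   b <= z. *)

Lemma gdist_antidiagonal_eq (i j a b : nat) :
  (a <= i /\ b <= j) \/ (i < a /\ j < b) ->
  gdist (a, b) (i, S j) = gdist (a, b) (S i, j).
Proof. unfold gdist, absdiff; cbn [fst snd]; lia. Qed.

Lemma separator_antidiagonal (i j a b : nat) :
  separates (a, b) (i, S j) (S i, j) ->
  (a <= i /\ j < b) \/ (i < a /\ b <= j).
Proof.
  intro Hsep.
  destruct (le_lt_dec a i), (le_lt_dec b j); auto;
    exfalso; apply Hsep, gdist_antidiagonal_eq; lia.
Qed.

Theorem mainTheorem12 (m n : nat) (L : vertex -> Prop) (z z' : nat) :
  2 <= m -> 2 <= n ->
  landmark_set m n L ->
  1 <= z -> z < z' -> z' <= n ->
  L (1, z) -> L (m, z') ->
  (forall w, z < w <= z' -> ~ L (1, w)) ->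
  exists a b, L (a, b) /\ ((b <= z /\ a > 1) \/ (z' < b /\ a = 1)).
Proof.
  intros Hm Hn [Hgrid Hsep] Hz Hzz' Hz'n _ _ Hgap.
  destruct (Hsep (1, S z) (2, z)) as [[a b] [HL Hab]];
    [unfold in_grid; simpl; lia .. | intro E; injection E; lia |].
  assert (Ha : 1 <= a) by (apply Hgrid in HL; unfold in_grid in HL; simpl in HL; lia).
  exists a, b; split; [exact HL |].
  destruct (separator_antidiagonal 1 z a b Hab) as [[Ha1 Hb] | [Ha1 Hb]].
  - assert (z' < b).
    { destruct (le_lt_dec b z'); [|lia].
      exfalso; apply (Hgap b); [lia |].
      replace 1 with a by lia; exact HL. }
    right; lia.
  - left; lia.
Qed.
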